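(* Let $p\colon\mathbb{R}^n\to\mathbb{R}$ be a CPWL function and let $\{\mathcal{X}_i\}_{i\in[m]}$ be a family of closed connected subsets of $\mathbb{R}^n$ with $\bigcup_{i\in[m]}\mathcal{X}_i=\mathbb{R}^n$ and $p$ affine on each $\mathcal{X}_i$, such that $m$ is the minimum number of members among all such families of closed connected subsets. Let $\{\mathcal{H}_j\}_{j\in[k]}$ be any finite family of affine subspaces of $\mathbb{R}^n$ of dimension $n-1$. Then for every $i\in[m]$, $$\mathcal{X}_i\cap\left(\mathbb{R}^n\setminus\bigcup_{j\in[k]}\mathcal{H}_j\right)\neq\emptyset.$$
   Context: A function $p\colon\mathbb{R}^n\to\mathbb{R}$ is CPWL if there are finitely many closed subsets $\mathcal{U}_1,\dots,\mathcal{U}_m$ of $\mathbb{R}^n$ with $\mathbb{R}^n=\bigcup_i\mathcal{U}_i$ and $p$ affine on each $\mathcal{U}_i$. *)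

From HB Require Import structures.
From mathcomp Require Import all_boot all_order all_algebra.
From mathcomp Require Import all_classical all_reals all_analysis.
Set Implicit Arguments. Unset Strict Implicit. Unset Printing Implicit Defensive.
Import Order.TTheory GRing.Theory Num.Theory.
Import numFieldNormedType.Exports.
Local Open Scope ring_scope.
Local Open Scope classical_set_scope.

Definition affine_on (R : realType) (n : nat) (p : 'rV[R]_n -> R)
  (U : set 'rV[R]_n) : Prop :=
  exists (a : 'rV[R]_n) (b : R),
    forall x, U x -> p x = \sum_(i < n) a ord0 i * x ord0 i + b.

Definition CPWL (R : realType) (n : nat) (p : 'rV[R]_n -> R) : Prop :=
  exists (m : nat) (U : 'I_m -> set 'rV[R]_n),
    (forall i, closed (U i)) /\
    (\bigcup_(i in [set: 'I_m]) U i = [set: 'rV[R]_n]) /\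
    (forall i, affine_on p (U i)).

Definition cc_affine_cover (R : realType) (n : nat) (p : 'rV[R]_n -> R)
  (m : nat) (X : 'I_m -> set 'rV[R]_n) : Prop :=
  (forall i, closed (X i)) /\
  (forall i, connected (X i)) /\
  (\bigcup_(i in [set: 'I_m]) X i = [set: 'rV[R]_n]) /\
  (forall i, affine_on p (X i)).

(* An affine subspace of R^n of dimension n-1 : a translate x0 + V of a
   linear subspace V with dim V + 1 = n (so none exist when n = 0). *)
Definition affine_hyperplane (R : realType) (n : nat)
  (H : set 'rV[R]_n) : Prop :=
  exists (x0 : 'rV[R]_n) (V : {vspace 'rV[R]_n}),
    ((\dim V).+1 = n)%N /\ H = [set x | (x - x0) \in V].

From HB Require Import structures.
From mathcomp Require Import all_boot all_order all_algebra.
From mathcomp Require Import all_classical all_reals all_analysis.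
Import Order.TTheory GRing.Theory Num.Theory.
Import numFieldNormedType.Exports.
Local Open Scope ring_scope.
Local Open Scope classical_set_scope.

(* An affine hyperplane x0 + V lies in a level set of a non-zero linear form
   (one vanishing on V), so it misses an open dense set; hence the complement
   of finitely many hyperplanes is dense.  If X_i missed that complement, the
   closed set covered by the other X_l would contain a dense set, hence all of
   R^n, and dropping X_i would give a smaller cover, contradicting minimality. *)

Lemma open_dense_bigcap {T : topologicalType} {I : finType} {F : I -> set T} :
  (forall i, open (F i) /\ dense (F i)) ->
  open (\bigcap_i F i) /\ dense (\bigcap_i F i).
Proof.
move=> odF; have -> : [set: I] = [set` enum I].
  by apply/seteqP; split=> i //= _; rewrite mem_enum.
rewrite bigcap_seq; elim: (enum I) => [|a s [oS dS]].
  by rewrite big_nil; split=> [|O O0 _]; [exact: openT | rewrite setIT].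
have [oa da] := odF a; rewrite big_cons.
by split; [exact: openI | exact: denseI].
Qed.

Lemma denseS {T : topologicalType} {A B : set T} :
  A `<=` B -> dense A -> dense B.
Proof.
by move=> AB dA O O0 oO; apply: subset_nonempty (dA O O0 oO); exact: setIS.
Qed.

Lemma exists_notin_vspace {K : fieldType} {vT : vectType K} {V : {vspace vT}} :
  (\dim V < \dim {:vT})%N -> exists w, w \notin V.
Proof.
move=> dimV; apply: contrapT => allV; move: dimV; rewrite ltnNge.
rewrite dimvS //; apply/subvP => w _.
by apply/negPn/negP => wV; apply: allV; exists w.
Qed.

Lemma exists_scalar_vanishing_on_vspace {K : fieldType} {vT : vectType K}
    {V : {vspace vT}} {w : vT} :
  w \notin V ->
  exists f : {scalar vT}, (forall v, v \in V -> f v = 0) /\ f w != 0.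
Proof.
move=> wV; pose q := (\1 - projv V)%VF.
have qE u : q u = u - projv V u by rewrite add_lfunE opp_lfunE id_lfunE.
have qw0 : q w != 0.
  by apply: contra wV; rewrite qE subr_eq0 => /eqP ->; exact: memv_proj.
have [j qj] : exists j, coord (vbasis fullv) j (q w) != 0.
  apply/existsP; apply: contraR qw0; rewrite negb_exists => /forallP qw.
  rewrite (coord_vbasis (memvf (q w))) big1 // => j _.
  by move/negPn/eqP: (qw j) => ->; rewrite scale0r.
exists (coord (vbasis fullv) j \o q)%FUN; split => //= v vV.
by rewrite qE projv_id // subrr linear0.
Qed.

Lemma rV_scalarE (R : comNzRingType) (n : nat) (f : {scalar 'rV[R]_n}) x :
  f x = \sum_(i < n) x 0 i * f (delta_mx 0 i).
Proof.
rewrite {1}(row_sum_delta x) linear_sum.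
by apply: eq_bigr => i _; rewrite scalarZ.
Qed.

Lemma rV_scalar_continuous {R : realType} {n : nat} (f : {scalar 'rV[R]_n}) :
  continuous f.
Proof.
rewrite (_ : f = (fun x => \sum_(i < n) x 0 i * f (delta_mx 0 i)) :> (_ -> _)).
  apply: continuous_big => [|i _ x]; first exact: add_continuous.
  exact: cvgMr_tmp (@coord_continuous R 1 n 0 i x).
by apply: funext => x; exact: rV_scalarE.
Qed.

Lemma dense_scalar_neq {R : realType} {V : normedModType R} {f : {scalar V}}
    {w : V} (b : R) :
  f w != 0 -> dense [set x | f x != b].
Proof.
move=> fw0 O [y Oy] oO.
have [fyb|] := eqVneq (f y) b; last by exists y.
have line : (fun t : R => y + t *: w) @ (0 : R) --> y.
  rewrite -[y in _ --> y]addr0 -(scale0r w).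
  exact: (cvgD (cvg_cst y) (cvgZr_tmp cvg_id)).
have /filter_ex [t [Ot t0]] :
    \forall t \near (0 : R)^', O (y + t *: w) /\ t != 0.
  near=> t; split; last by near: t; exact: nbhs_dnbhs_neq.
  by near: t; apply: cvg_within; apply: line; exact: open_nbhs_nbhs.
exists (y + t *: w); split => //=.
by rewrite linearD scalarZ fyb -subr_eq0 addrC addKr mulf_neq0.
Unshelve. all: by end_near. Qed.

Lemma affine_hyperplane_nowhere_dense {R : realType} {n : nat}
    {H : set 'rV[R]_n} :
  affine_hyperplane H -> exists O, [/\ open O, dense O & O `<=` ~` H].
Proof.
move=> [x0 [V [dimV ->]]].
have [w wV] : exists w, w \notin V.
  apply: exists_notin_vspace.
  by rewrite dimvf dim_matrix mul1r -[n in (_ < n)%N]dimV.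
have [f [fV fw]] := exists_scalar_vanishing_on_vspace wV.
exists [set x | f x != f x0]; split.
- apply: (@open_comp _ _ f [set r | r != f x0]); last exact: open_neq.
  by move=> x _; exact: rV_scalar_continuous.
- exact: dense_scalar_neq fw.
- by move=> x /= + Vx; rewrite -subr_eq0 -linearB fV ?eqxx.
Qed.

Lemma dense_setC_bigcup_hyperplanes {R : realType} {n k : nat}
    {H : 'I_k -> set 'rV[R]_n} :
  (forall j, affine_hyperplane (H j)) ->
  dense (~` \bigcup_(j in [set: 'I_k]) H j).
Proof.
move=> Hhyp.
have [G HG] := choice (fun j => affine_hyperplane_nowhere_dense (Hhyp j)).
have [_ dG] : open (\bigcap_j G j) /\ dense (\bigcap_j G j).
  by apply: open_dense_bigcap => j; have [oG dG _] := HG j.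
apply: denseS dG => x Gx [j _ Hx].
by have [_ _ GH] := HG j; exact: GH x (Gx j I) Hx.
Qed.

Lemma bigcup_lift_cover {T : topologicalType} {m : nat}
    {X : 'I_m.+1 -> set T} {i : 'I_m.+1} {D : set T} :
  (forall l, closed (X l)) -> \bigcup_(l in [set: 'I_m.+1]) X l = [set: T] ->
  dense D -> X i `&` D = set0 ->
  \bigcup_(l in [set: 'I_m]) X (lift i l) = [set: T].
Proof.
move=> Xcl Xcov dD XiD; apply/seteqP; split => // x _.
set U := \bigcup_(l in _) _; apply: contrapT => Ux.
have oU : open (~` U).
  apply: closed_openC; apply: closed_bigcup => [|l _]; first exact: finite_finset.
  exact: Xcl.
have [z [Uz Dz]] := dD _ (ex_intro _ x Ux) oU.
have [l0 _ Xz] : (\bigcup_(l in [set: 'I_m.+1]) X l) z by rewrite Xcov.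
case: (unliftP i l0) => [l|] El0; rewrite El0 in Xz.
  by apply: Uz; exists l.
by rewrite -[False]/(set0 z) -XiD.
Qed.

Theorem lemma13 (R : realType) (n : nat) (p : 'rV[R]_n -> R)
  (m : nat) (X : 'I_m -> set 'rV[R]_n) (k : nat) (H : 'I_k -> set 'rV[R]_n) :
  CPWL p ->
  cc_affine_cover p X ->
  (forall (m' : nat) (Y : 'I_m' -> set 'rV[R]_n),
      cc_affine_cover p Y -> (m <= m')%N) ->
  (forall j, affine_hyperplane (H j)) ->
  forall i : 'I_m,
    X i `&` (~` \bigcup_(j in [set: 'I_k]) H j) !=set0.
Proof.
move=> _ [Xcl [Xconn [Xcov Xaff]]] Xmin Hhyp.
case: m => [|m] in X Xcl Xconn Xcov Xaff Xmin *; first by case.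
move=> i; apply/set0P/negP => /eqP XiH.
have Ycov : cc_affine_cover p (fun l : 'I_m => X (lift i l)).
  split=> [l|]; first exact: Xcl.
  split=> [l|]; first exact: Xconn.
  split=> [|l]; last exact: Xaff.
  exact: bigcup_lift_cover Xcl Xcov (dense_setC_bigcup_hyperplanes Hhyp) XiH.
by have := Xmin _ _ Ycov; rewrite ltnn.
Qed.
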